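(* Let $E$ be a topological vector space with a fundamental sequence of bounded sets. If $E$ has property (PS), then $E$ has countable $cs^\ast$-character.
   Context: A fundamental sequence of bounded sets is a sequence $(B_n)$ of bounded sets such that every bounded set lies in some $B_n$. A topological (additive) group has property (PS) if for every sequence $(g_n)$ converging to $0$ there are strictly increasing sequences $(m_k),(n_k)$ of natural numbers with $m_kg_{n_k}\to0$. A family $\mathcal{N}$ of subsets of $X$ is a $cs^\ast$-network at $x$ if for each sequence $(x_n)$ converging to $x$ and each neighborhood $O_x$ of $x$ there is $N\in\mathcal{N}$ with $x\in N\subseteq O_x$ and $\{n:x_n\in N\}$ infinite; the $cs^\ast$-character of $X$ is the supremum over $x\in X$ of the least cardinality of a $cs^\ast$-network at $x$. *)

From Stdlib Require Import Reals.
Open Scope R_scope.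

(** No separation axiom. *)
Record TVS := {
  carrier :> Type;
  vadd : carrier -> carrier -> carrier;
  vopp : carrier -> carrier;
  vzero : carrier;
  vscal : R -> carrier -> carrier;
  vadd_assoc : forall x y z, vadd x (vadd y z) = vadd (vadd x y) z;
  vadd_comm : forall x y, vadd x y = vadd y x;
  vadd_0 : forall x, vadd x vzero = x;
  vadd_opp : forall x, vadd x (vopp x) = vzero;
  vscal_assoc : forall a b x, vscal a (vscal b x) = vscal (a * b) x;
  vscal_1 : forall x, vscal 1 x = x;
  vscal_distr_v : forall a x y, vscal a (vadd x y) = vadd (vscal a x) (vscal a y);
  vscal_distr_s : forall a b x, vscal (a + b) x = vadd (vscal a x) (vscal b x);
  is_open : (carrier -> Prop) -> Prop;
  open_full : is_open (fun _ => True);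
  open_inter : forall U V, is_open U -> is_open V -> is_open (fun x => U x /\ V x);
  open_union : forall (F : (carrier -> Prop) -> Prop),
      (forall U, F U -> is_open U) -> is_open (fun x => exists U, F U /\ U x);
  vadd_cont : forall x y W, is_open W -> W (vadd x y) ->
      exists U V, is_open U /\ is_open V /\ U x /\ V y /\
        (forall u v, U u -> V v -> W (vadd u v));
  vscal_cont : forall a x W, is_open W -> W (vscal a x) ->
      exists eps U, eps > 0 /\ is_open U /\ U x /\
        (forall b u, Rabs (b - a) < eps -> U u -> W (vscal b u))
}.

Section Defs.
Variable E : TVS.

Definition nbhd (x : E) (O : E -> Prop) : Prop :=
  exists U, is_open E U /\ U x /\ (forall y, U y -> O y).

Definition converges (s : nat -> E) (x : E) : Prop :=
  forall O, nbhd x O -> exists N, forall n, (n >= N)%nat -> O (s n).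

Definition bounded (B : E -> Prop) : Prop :=
  forall V, nbhd (vzero E) V ->
    exists s, s > 0 /\ forall t, t > s -> forall b, B b ->
      exists v, V v /\ b = vscal E t v.

Definition subset (A B : E -> Prop) : Prop := forall x, A x -> B x.

Definition fundamental_bounded_seq (B : nat -> E -> Prop) : Prop :=
  (forall n, bounded (B n)) /\
  (forall A, bounded A -> exists n, subset A (B n)).

Definition has_fundamental_bounded_seq : Prop :=
  exists B, fundamental_bounded_seq B.

Definition strictly_increasing (m : nat -> nat) : Prop :=
  forall k, (m k < m (S k))%nat.

Definition property_PS : Prop :=
  forall g : nat -> E, converges g (vzero E) ->
    exists m n : nat -> nat, strictly_increasing m /\ strictly_increasing n /\
      converges (fun k => vscal E (INR (m k)) (g (n k))) (vzero E).

Definition cs_star_network_at (x : E) (N : (E -> Prop) -> Prop) : Prop :=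
  forall (s : nat -> E) (O : E -> Prop), converges s x -> nbhd x O ->
    exists A, N A /\ A x /\ subset A O /\
      (forall M, exists n, (n >= M)%nat /\ A (s n)).

Definition countable_family (N : (E -> Prop) -> Prop) : Prop :=
  exists f : nat -> (E -> Prop), forall A, N A -> exists n, A = f n.

Definition countable_cs_star_character : Prop :=
  forall x : E, exists N, countable_family N /\ cs_star_network_at x N.

End Defs.

(** Translating by [x], a sequence [s -> x] gives a null sequence [g = s - x].
    Property (PS) makes some [m_k g_(n_k)] null, hence bounded, hence contained
    in a member [B_a] of the fundamental sequence.  So infinitely many [s_n]
    lie in [x + U_(m >= M) m^-1 B_a], and these sets, indexed by the countably
    many pairs [(a, M)], shrink into any neighbourhood of [x] as [M] grows
    because [B_a] is bounded. *)
From Pilot Require Import Defs.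
From Stdlib Require Import Reals Lra Lia Cantor.

Section TVSFacts.
Variable E : TVS.

Definition vsub (y x : E) : E := vadd E y (vopp E x).

Lemma vsub_addK (y x : E) : vadd E (vsub y x) x = y.
Proof.
  unfold vsub. rewrite <- vadd_assoc, (vadd_comm E (vopp E x) x), vadd_opp.
  apply vadd_0.
Qed.

Lemma vscal_0_l (z : E) : vscal E 0 z = vzero E.
Proof.
  assert (Hdouble : vscal E 0 z = vadd E (vscal E 0 z) (vscal E 0 z)).
  { rewrite <- vscal_distr_s. f_equal. ring. }
  assert (Hcancel : vadd E (vscal E 0 z) (vopp E (vscal E 0 z)) =
    vadd E (vadd E (vscal E 0 z) (vscal E 0 z)) (vopp E (vscal E 0 z)))
    by (rewrite <- Hdouble; reflexivity).
  rewrite <- vadd_assoc, vadd_opp, vadd_0 in Hcancel. congruence.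
Qed.

Lemma vscal_invK (t : R) (z : E) : t <> 0 -> vscal E t (vscal E (/ t) z) = z.
Proof. intros. rewrite vscal_assoc, Rinv_r by assumption. apply vscal_1. Qed.

Lemma vscal_Kinv (t : R) (z : E) : t <> 0 -> vscal E (/ t) (vscal E t z) = z.
Proof. intros. rewrite vscal_assoc, Rinv_l by assumption. apply vscal_1. Qed.

Lemma Rabs_inv_lt (eps t : R) : eps > 0 -> t > / eps -> Rabs (/ t - 0) < eps.
Proof.
  intros Heps Ht.
  assert (Hinv : / eps > 0) by (apply Rinv_0_lt_compat; assumption).
  rewrite Rminus_0_r, Rabs_pos_eq by (left; apply Rinv_0_lt_compat; lra).
  rewrite <- (Rinv_inv eps).
  apply Rinv_lt_contravar; [apply Rmult_lt_0_compat; lra | assumption].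
Qed.

Lemma vscal_inv_large (U : E -> Prop) (z : E) :
  is_open E U -> U (vzero E) ->
  exists r U', r > 0 /\ is_open E U' /\ U' z /\
    forall t u, t > r -> U' u -> U (vscal E (/ t) u).
Proof.
  intros HU HU0.
  assert (Hz : U (vscal E 0 z)) by (rewrite vscal_0_l; assumption).
  destruct (vscal_cont E 0 z U HU Hz) as [eps [U' [Heps [HU' [HU'z Hc]]]]].
  exists (/ eps), U'. repeat split; try assumption.
  - apply Rinv_0_lt_compat. assumption.
  - intros t u Ht Hu. apply Hc; [apply Rabs_inv_lt|]; assumption.
Qed.

Lemma finite_family_absorbed (h : nat -> E) (U : E -> Prop) :
  is_open E U -> U (vzero E) -> forall N,
  exists r, r > 0 /\ forall k t, (k < N)%nat -> t > r -> U (vscal E (/ t) (h k)).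
Proof.
  intros HU HU0 N. induction N as [|N [r [Hr IH]]].
  - exists 1. split; [lra | intros; lia].
  - destruct (vscal_inv_large U (h N) HU HU0) as [r' [U' [Hr' [_ [HhN Hc]]]]].
    exists (Rmax r r'). split; [apply Rlt_le_trans with r; [|apply Rmax_l]; assumption|].
    intros k t Hk Ht.
    destruct (Nat.eq_dec k N) as [->|Hne].
    + apply Hc; [apply Rle_lt_trans with (Rmax r r'); [apply Rmax_r|]|]; assumption.
    + apply IH; [lia | apply Rle_lt_trans with (Rmax r r'); [apply Rmax_l|assumption]].
Qed.

Lemma bounded_range_of_null (h : nat -> E) :
  converges E h (vzero E) -> Defs.bounded E (fun y => exists k, y = h k).
Proof.
  intros Hh V [U [HU [HU0 HUV]]].
  destruct (vscal_inv_large U (vzero E) HU HU0) as [r [U' [Hr [HU' [HU'0 Hc]]]]].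
  destruct (Hh U') as [N HN]; [exists U'; repeat split; auto|].
  destruct (finite_family_absorbed h U HU HU0 N) as [r' [Hr' Hfin]].
  exists (Rmax r r'). split; [apply Rlt_le_trans with r; [|apply Rmax_l]; assumption|].
  intros t Ht y [k ->].
  assert (Htr : t > r) by (apply Rle_lt_trans with (Rmax r r'); [apply Rmax_l|assumption]).
  assert (Htr' : t > r') by (apply Rle_lt_trans with (Rmax r r'); [apply Rmax_r|assumption]).
  exists (vscal E (/ t) (h k)). split.
  - apply HUV. destruct (Compare_dec.le_lt_dec N k) as [Hk|Hk].
    + apply Hc; [|apply HN]; assumption.
    + apply Hfin; assumption.
  - rewrite vscal_invK; [reflexivity | lra].
Qed.

Lemma converges_vsub (s : nat -> E) (x : E) :
  converges E s x -> converges E (fun k => vsub (s k) x) (vzero E).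
Proof.
  intros Hs O [U [HU [HU0 HUO]]].
  assert (Hx : U (vadd E x (vopp E x))) by (rewrite vadd_opp; assumption).
  destruct (vadd_cont E x (vopp E x) U HU Hx) as [U1 [V1 [HU1 [_ [HU1x [HV1 Hc]]]]]].
  destruct (Hs U1) as [N HN]; [exists U1; repeat split; auto|].
  exists N. intros n Hn. apply HUO, Hc; [apply HN|]; assumption.
Qed.

Lemma nbhd_translate_0 (x : E) (O : E -> Prop) :
  nbhd E x O -> nbhd E (vzero E) (fun z => O (vadd E z x)).
Proof.
  intros [U [HU [HUx HUO]]].
  assert (H0x : U (vadd E (vzero E) x)) by (rewrite vadd_comm, vadd_0; assumption).
  destruct (vadd_cont E (vzero E) x U HU H0x) as [U1 [V1 [HU1 [_ [HU10 [HV1 Hc]]]]]].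
  exists U1. repeat split; try assumption.
  intros z Hz. apply HUO, Hc; assumption.
Qed.

(** [x + U_(m >= M) m^-1 A], where [0^-1 A] stands for [{z | 0 \in A}]. *)
Definition scaled_difference_set (A : E -> Prop) (x : E) (M : nat) : E -> Prop :=
  fun y => y = x \/ exists m, (m >= M)%nat /\ A (vscal E (INR m) (vsub y x)).

Lemma scaled_difference_set_sub (A O : E -> Prop) (x : E) :
  Defs.bounded E A -> nbhd E x O -> exists M, subset E (scaled_difference_set A x M) O.
Proof.
  intros HA HO.
  destruct (HA _ (nbhd_translate_0 x O HO)) as [r [Hr Habs]].
  destruct (INR_unbounded r) as [M HM].
  exists M. intros y [->|[m [Hm HAm]]].
  - destruct HO as [U [_ [HUx HUO]]]. apply HUO. assumption.
  - assert (HmM : INR m >= INR M) by (apply Rle_ge, le_INR; lia).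
    destruct (Habs (INR m) ltac:(lra) _ HAm) as [v [Hv Heq]].
    assert (Hyx : vsub y x = v).
    { rewrite <- (vscal_Kinv (INR m) (vsub y x)) by lra.
      rewrite Heq. apply vscal_Kinv. lra. }
    rewrite <- (vsub_addK y x), Hyx. assumption.
Qed.

Lemma strictly_increasing_ge (m : nat -> nat) :
  strictly_increasing m -> forall k, (k <= m k)%nat.
Proof. intros Hm k. induction k; [lia|]. specialize (Hm k). lia. Qed.

Lemma scaled_difference_set_frequent (A : E -> Prop) (s : nat -> E) (x : E)
    (m n : nat -> nat) :
  strictly_increasing m -> strictly_increasing n ->
  (forall k, A (vscal E (INR (m k)) (vsub (s (n k)) x))) ->
  forall M M', exists j, (j >= M')%nat /\ scaled_difference_set A x M (s j).
Proof.
  intros Hm Hn HA M M'.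
  pose proof (strictly_increasing_ge m Hm (max M M')).
  pose proof (strictly_increasing_ge n Hn (max M M')).
  exists (n (max M M')). split; [lia|].
  right. exists (m (max M M')). split; [lia | apply HA].
Qed.

End TVSFacts.

Lemma countable_family_indexed2 (E : TVS) (F : nat -> nat -> E -> Prop) :
  countable_family E (fun A => exists a M, A = F a M).
Proof.
  exists (fun p => F (fst (of_nat p)) (snd (of_nat p))).
  intros A [a [M ->]]. exists (to_nat (a, M)). rewrite cancel_of_to. reflexivity.
Qed.

Theorem mainTheorem13 (E : TVS) :
  has_fundamental_bounded_seq E -> property_PS E -> countable_cs_star_character E.
Proof.
  intros [B [HBbounded HBfund]] HPS x.
  exists (fun A => exists a M, A = scaled_difference_set E (B a) x M).
  split; [apply countable_family_indexed2|].
  intros s O Hs HO.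
  destruct (HPS _ (converges_vsub E s x Hs)) as [m [n [Hm [Hn Hnull]]]].
  destruct (HBfund _ (bounded_range_of_null E _ Hnull)) as [a Ha].
  destruct (scaled_difference_set_sub E (B a) O x (HBbounded a) HO) as [M HM].
  exists (scaled_difference_set E (B a) x M).
  split; [eauto|]. split; [left; reflexivity|]. split; [assumption|].
  apply (scaled_difference_set_frequent E (B a) s x m n Hm Hn).
  intros k. apply Ha. exists k. reflexivity.
Qed.
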